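(* Let $\tilde X,\tilde Y$ be $\mathbb{N}$-valued random variables with $\mathbb{E}[\tilde X^2+\tilde Y^2]<+\infty$, let $b_1,b_2>0$, $m_0>0$, and assume $b_1(\mathbb{E}[\tilde X]-1)+b_2\mathbb{E}[\tilde Y]=0$. Write $\hat p_{\tilde X}(z)=\mathbb{E}[z^{\tilde X}]$, $\hat p_{\tilde Y}(z)=\mathbb{E}[z^{\tilde Y}]$. Then the unique $C^1$ function $\hat g_\infty$ on $[0,1]$ with $\hat g_\infty(1)=1$ solving $$m_0b_2(\hat p_{\tilde Y}(z)-1)\,\hat g_\infty(z)+b_1(\hat p_{\tilde X}(z)-z)\,\partial_z\hat g_\infty(z)=0,\qquad z\in[0,1],$$ is $$\hat g_\infty(z)=\exp\Big\{-m_0\frac{b_2}{b_1}\int_z^1\frac{1-\hat p_{\tilde Y}(s)}{\hat p_{\tilde X}(s)-s}\,ds\Big\}.$$ Moreover $\hat g_\infty$ is the probability generating function of an infinitely divisible distribution $g_\infty$ on $\mathbb{N}$. Finally, $g_\infty$ is the density of a random variable $V_\infty$ satisfying $$V_\infty^*\stackrel{d}{=}V_\infty+1+\zeta+\sum_{k=1}^{\gamma}\xi_k,$$ where $V^*_\infty$ is the size-biased version of $V_\infty$, $\zeta$ has generating function $Q^*$, each $\xi_k$ has generating function $P^*$, $\gamma$ has the geometric distribution of parameter $m=\mathbb{E}[\tilde X]$, and $V_\infty,\zeta,\gamma,\xi_1,\xi_2,\dots$ are independent.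
   Context: Let $\phi_X(z)=\sum_{k\ge0}z^kP\{\tilde X>k\}$, $\phi_Y(z)=\sum_{k\ge0}z^kP\{\tilde Y>k\}$, $m=\mathbb{E}[\tilde X]$, $P^*(z)=m^{-1}\phi_X(z)$ and $Q^*(z)=\frac{b_2}{b_1}(1-m)^{-1}\phi_Y(z)$ (these are probability generating functions under the hypotheses). The geometric distribution of parameter $m$ is the law on $\mathbb{N}$ with generating function $(1-m)/(1-ms)$. For a random variable $V$ on $\mathbb{N}$ with density $g$ and finite mean $M_1(g)$, its size-biased version $V^*$ has density $g^*(k)=kg(k)/M_1(g)$. The displayed differential equation is the stationary equation of the linear equation $\partial_t\hat g=b_1(\hat p_{\tilde X}(z)-z)\partial_z\hat g+b_2m_0e^{\bar\alpha_1t}(\hat p_{\tilde Y}(z)-1)\hat g$ with $\bar\alpha_1=b_1(\mathbb{E}[\tilde X]-1)+b_2\mathbb{E}[\tilde Y]=0$. *)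

From Stdlib Require Import Reals.
From Coquelicot Require Import Coquelicot.
Open Scope R_scope.

Definition is_distr (p : nat -> R) : Prop :=
  (forall k, 0 <= p k) /\ is_series p 1.

Definition pgf (p : nat -> R) (z : R) : R := Series (fun k => p k * z ^ k).

Definition mean (p : nat -> R) : R := Series (fun k => INR k * p k).
Definition finite_second_moment (p : nat -> R) : Prop :=
  ex_series (fun k => INR k ^ 2 * p k).

Definition tail (p : nat -> R) (k : nat) : R := Series (fun j => p (k + 1 + j)%nat).

Definition phi (p : nat -> R) (z : R) : R := Series (fun k => tail p k * z ^ k).

Definition Pstar (pX : nat -> R) (z : R) : R := phi pX z / mean pX.
Definition Qstar (pX pY : nat -> R) (b1 b2 : R) (z : R) : R :=
  b2 / b1 / (1 - mean pX) * phi pY z.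

Definition ghat (pX pY : nat -> R) (b1 b2 m0 : R) (z : R) : R :=
  exp (- (m0 * (b2 / b1)
          * RInt (fun s => (1 - pgf pY s) / (pgf pX s - s)) z 1)).

Definition C1_on01 (h dh : R -> R) : Prop :=
  (forall z, 0 <= z <= 1 ->
     filterlim (fun y => (h y - h z) / (y - z))
       (within (fun y => 0 <= y <= 1 /\ y <> z) (locally z))
       (locally (dh z))) /\
  (forall z, 0 <= z <= 1 ->
     filterlim dh (within (fun y => 0 <= y <= 1) (locally z)) (locally (dh z))).

Definition solves_stationary (pX pY : nat -> R) (b1 b2 m0 : R)
    (h dh : R -> R) : Prop :=
  forall z, 0 <= z <= 1 ->
    m0 * b2 * (pgf pY z - 1) * h z + b1 * (pgf pX z - z) * dh z = 0.

Definition conv (p q : nat -> R) (n : nat) : R :=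
  sum_f_R0 (fun k => p k * q (n - k)%nat) n.

Definition dirac (a : nat) (n : nat) : R := if Nat.eqb n a then 1 else 0.

Fixpoint convpow (p : nat -> R) (n : nat) : nat -> R :=
  match n with
  | O => dirac 0
  | S n' => conv p (convpow p n')
  end.

Definition inf_divisible (g : nat -> R) : Prop :=
  forall n : nat, (1 <= n)%nat ->
    exists h : nat -> R, is_distr h /\ forall k, convpow h n k = g k.

Definition size_biased (g : nat -> R) (k : nat) : R := INR k * g k / mean g.

(* Law of sum_{k=1}^{gamma} xi_k with gamma, xi_1, xi_2, ... independent,
   gamma of law pg and the xi_k i.i.d. of law pxi. *)
Definition compound (pg pxi : nat -> R) (n : nat) : R :=
  Series (fun j => pg j * convpow pxi j n).

From Stdlib Require Import Reals Lra Lia Psatz.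
From Coquelicot Require Import Coquelicot.
Open Scope R_scope.

(* Write [F s = (1 - pY(s)) / (pX(s) - s) = phi_Y(s) / (1 - phi_X(s))], with [phi] the
   generating function of the tails; the criticality condition makes [F] continuous at 1 with
   [F 1 = b1 / b2]. The stationary equation reads [h' = c F h] with [c = m0 b2 / b1], so an
   integrating factor shows that every C^1 solution with [h 1 = 1] is
   [ghat z = exp (- c int_z^1 F)].
   Since [1 / (1 - phi_X) = sum_j phi_X^j], the power series of [F] has nonnegative
   coefficients, hence so has [A z = c int_0^z F], and [ghat = exp (A z - A 1)] is the pgf of a
   compound Poisson law; replacing [c] by [c / n] gives its n-th convolution roots.
   Finally the size-biased law has pgf [z ghat'(z) / ghat'(1) = ghat z * z F(z) / F(1)], and
   [z F(z) / F(1) = z * Q*(z) * (1 - m) / (1 - m P*(z))] is the pgf of [1 + zeta + sum xi_k]. *)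

Lemma PSeries_Series (a : nat -> R) (z : R) : PSeries a z = Series (fun k => a k * z ^ k).
Proof. apply Series_ext. intro k. unfold scal; simpl; unfold mult; simpl. ring. Qed.

Lemma is_series_mult_l (c : R) (a : nat -> R) (l : R) :
  is_series a l -> is_series (fun n => c * a n) (c * l).
Proof. apply (is_series_scal_l c a l). Qed.

Lemma sum_f_R0_le_mono (a : nat -> R) (n m : nat) :
  (forall k, 0 <= a k) -> (n <= m)%nat -> sum_f_R0 a n <= sum_f_R0 a m.
Proof. intros Ha H. induction H; [lra|]. simpl. specialize (Ha (S m)). lra. Qed.

Lemma ex_series_partial_bounded (a : nat -> R) (M : R) :
  (forall k, 0 <= a k) -> (forall N, sum_f_R0 a N <= M) -> ex_series a /\ Series a <= M.
Proof.
  intros Ha HM.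
  destruct (growing_cv (sum_f_R0 a)) as [l Hl].
  - intro n. simpl. specialize (Ha (S n)). lra.
  - exists M. intros x [n ->]. apply HM.
  - assert (Hs : is_series a l) by (apply is_series_Reals; exact Hl).
    split; [exists l; exact Hs|].
    rewrite (is_series_unique a l Hs).
    apply Rnot_lt_le; intro H.
    destruct (Hl (l - M)) as [N HN]; [lra|].
    specialize (HN N (le_n _)). specialize (HM N). unfold R_dist in HN. apply Rabs_def2 in HN. lra.
Qed.

Lemma sum_f_R0_le_Series (a : nat -> R) (N : nat) :
  (forall k, 0 <= a k) -> ex_series a -> sum_f_R0 a N <= Series a.
Proof.
  intros Ha [l Hl]. rewrite (is_series_unique _ _ Hl).
  apply is_series_Reals in Hl.
  apply Rnot_lt_le; intro H.
  destruct (Hl (sum_f_R0 a N - l)) as [K HK]; [lra|].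
  specialize (HK (max K N) (Nat.le_max_l _ _)).
  assert (sum_f_R0 a N <= sum_f_R0 a (max K N)) by (apply sum_f_R0_le_mono; auto; lia).
  unfold R_dist in HK. apply Rabs_def2 in HK. lra.
Qed.

Lemma Series_ge0 (a : nat -> R) : (forall k, 0 <= a k) -> ex_series a -> 0 <= Series a.
Proof.
  intros Ha He. pose proof (sum_f_R0_le_Series a 0 Ha He). simpl in H. specialize (Ha 0%nat). lra.
Qed.

Lemma term_le_Series (a : nat -> R) (n : nat) :
  (forall k, 0 <= a k) -> ex_series a -> a n <= Series a.
Proof.
  intros Ha He. apply Rle_trans with (sum_f_R0 a n); [|apply sum_f_R0_le_Series; auto].
  destruct n; simpl; [lra|]. pose proof (cond_pos_sum a n Ha). lra.
Qed.

Lemma is_series_finite (a : nat -> R) (N : nat) :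
  (forall k, (N < k)%nat -> a k = 0) -> is_series a (sum_f_R0 a N).
Proof.
  intros H. apply is_series_Reals. intros eps Heps. exists N. intros n Hn.
  assert (E : sum_f_R0 a n = sum_f_R0 a N).
  { induction Hn; [reflexivity|]. simpl. rewrite IHHn, H by lia. ring. }
  rewrite E. unfold R_dist. rewrite Rminus_diag, Rabs_R0. auto.
Qed.

Lemma is_series_sum_f_R0 (a : nat -> nat -> R) (T : nat -> R) (N : nat) :
  (forall n, is_series (fun j => a j n) (T n)) ->
  is_series (fun j => sum_f_R0 (fun n => a j n) N) (sum_f_R0 T N).
Proof.
  intros H. induction N; simpl; [apply H|].
  apply (is_series_plus (fun j => sum_f_R0 (fun n => a j n) N) (fun j => a j (S N))); auto.
Qed.

Lemma is_series_swap_nonneg (a : nat -> nat -> R) (s : nat -> R) (S : R) :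
  (forall j n, 0 <= a j n) -> (forall j, is_series (a j) (s j)) -> is_series s S ->
  (forall n, ex_series (fun j => a j n)) /\ is_series (fun n => Series (fun j => a j n)) S.
Proof.
  intros Ha Hs HS.
  assert (Hse : forall j, ex_series (a j)) by (intro j; exists (s j); auto).
  assert (HSS : Series s = S) by (apply is_series_unique; auto).
  assert (Hcol : forall n, ex_series (fun j => a j n)).
  { intro n. apply (ex_series_partial_bounded _ S); [intro; auto|]. intro J.
    apply Rle_trans with (sum_f_R0 s J).
    - apply sum_Rle. intros j _. rewrite <- (is_series_unique _ _ (Hs j)). apply term_le_Series; auto.
    - rewrite <- HSS. apply sum_f_R0_le_Series; [|exists S; auto].
      intro j. rewrite <- (is_series_unique _ _ (Hs j)). apply Series_ge0; auto. }
  split; auto.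
  set (T := fun n => Series (fun j => a j n)).
  assert (HT : forall n, is_series (fun j => a j n) (T n)) by (intro n; apply Series_correct; auto).
  assert (HTnn : forall n, 0 <= T n) by (intro n; apply Series_ge0; auto).
  destruct (ex_series_partial_bounded T S HTnn) as [HTe HTS].
  { intro N. pose proof (is_series_sum_f_R0 a T N HT) as HW.
    rewrite <- (is_series_unique _ _ HW), <- HSS.
    apply Series_le; [|exists S; auto]. intro j. split; [apply cond_pos_sum; auto|].
    rewrite <- (is_series_unique _ _ (Hs j)). apply sum_f_R0_le_Series; auto. }
  assert (Hlow : Series s <= Series T).
  { apply ex_series_partial_bounded.
    - intro j. rewrite <- (is_series_unique _ _ (Hs j)). apply Series_ge0; auto.
    - intro J. pose proof (is_series_sum_f_R0 (fun n j => a j n) s J Hs) as HW.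
      rewrite <- (is_series_unique _ _ HW).
      apply Series_le; auto. intro n. split; [apply cond_pos_sum; auto|].
      apply (sum_f_R0_le_Series (fun j => a j n)); auto. }
  replace S with (Series T) by lra. apply Series_correct; auto.
Qed.

Lemma pow_ge_Bernoulli (z : R) (N : nat) : 0 <= z <= 1 -> 1 - INR N * (1 - z) <= z ^ N.
Proof.
  intros Hz. induction N; [simpl; lra|].
  rewrite S_INR. simpl.
  pose proof (pow_le z N (proj1 Hz)). pose proof (pos_INR N).
  assert (z * (1 - INR N * (1 - z)) <= z * z ^ N) by (apply Rmult_le_compat_l; lra).
  assert (0 <= INR N * (1 - z) * (1 - z)) by (apply Rmult_le_pos; [apply Rmult_le_pos|]; lra).
  nra.
Qed.

Lemma pow_le_1 (z : R) (n : nat) : 0 <= z <= 1 -> z ^ n <= 1.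
Proof. intros Hz. rewrite <- (pow1 n). apply pow_incr. lra. Qed.

Lemma pow_le_pow_01 (z : R) (k N : nat) : 0 <= z <= 1 -> (k <= N)%nat -> z ^ N <= z ^ k.
Proof.
  intros Hz H. replace N with (k + (N - k))%nat by lia. rewrite pow_add.
  pose proof (pow_le z k (proj1 Hz)). pose proof (pow_le_1 z (N - k) Hz). nra.
Qed.

Section NonnegPowerSeries.
Variable b : nat -> R.
Hypothesis Hb : forall k, 0 <= b k.

Lemma pow_mult_sum_le (z : R) (N : nat) : 0 <= z <= 1 ->
  z ^ N * sum_f_R0 b N <= sum_f_R0 (fun k => b k * z ^ k) N.
Proof.
  intros Hz. rewrite scal_sum. apply sum_Rle. intros k Hk.
  apply Rmult_le_compat_l; auto. apply pow_le_pow_01; auto.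
Qed.

Lemma pow_term_bounds (z : R) (k : nat) : 0 <= z <= 1 -> 0 <= b k * z ^ k <= b k.
Proof.
  intros Hz. pose proof (pow_le_1 z k Hz). pose proof (Hb k). pose proof (pow_le z k (proj1 Hz)).
  split; nra.
Qed.

Lemma ex_series_pow_01 (z : R) : ex_series b -> 0 <= z <= 1 -> ex_series (fun k => b k * z ^ k).
Proof.
  intros He Hz. apply (@ex_series_le R_AbsRing R_CompleteNormedModule _ b); auto.
  intro n. change norm with Rabs. simpl. pose proof (pow_term_bounds z n Hz).
  rewrite Rabs_pos_eq; lra.
Qed.

Lemma Series_pow_le_Series (z : R) : ex_series b -> 0 <= z <= 1 ->
  Series (fun k => b k * z ^ k) <= Series b.
Proof. intros He Hz. apply Series_le; auto. intro n. apply pow_term_bounds; auto. Qed.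

Lemma Series_pow_ge_partial (z : R) (N : nat) : ex_series b -> 0 <= z <= 1 ->
  sum_f_R0 b N - INR N * (1 - z) * sum_f_R0 b N <= Series (fun k => b k * z ^ k).
Proof.
  intros He Hz.
  replace (sum_f_R0 b N - INR N * (1 - z) * sum_f_R0 b N)
    with ((1 - INR N * (1 - z)) * sum_f_R0 b N) by ring.
  apply Rle_trans with (sum_f_R0 (fun k => b k * z ^ k) N).
  - apply Rle_trans with (z ^ N * sum_f_R0 b N); [|apply pow_mult_sum_le; auto].
    apply Rmult_le_compat_r; [apply cond_pos_sum; auto|apply pow_ge_Bernoulli; auto].
  - apply sum_f_R0_le_Series; [|apply ex_series_pow_01; auto].
    intro k. apply pow_term_bounds; auto.
Qed.

Lemma Series_pow_left_lim (S : R) : is_series b S ->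
  forall eps, 0 < eps -> exists d, 0 < d /\ forall z, 1 - d < z <= 1 ->
    Rabs (Series (fun k => b k * z ^ k) - S) < eps.
Proof.
  intros HS eps Heps.
  assert (He : ex_series b) by (exists S; auto).
  pose proof HS as HS'. apply is_series_Reals in HS'.
  destruct (HS' (eps / 2)) as [N HN]; [lra|].
  specialize (HN N (le_n _)). unfold R_dist in HN. apply Rabs_def2 in HN.
  set (T := sum_f_R0 b N) in *.
  assert (HTS : T <= S) by (rewrite <- (is_series_unique _ _ HS); apply sum_f_R0_le_Series; auto).
  assert (HT0 : 0 <= T) by (apply cond_pos_sum; auto).
  pose proof (pos_INR N) as HNp.
  set (d := Rmin 1 (eps / (2 * (INR N + 1) * (S + 1)))).
  assert (Hd1 : d <= 1) by apply Rmin_l.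
  assert (Hd2 : d <= eps / (2 * (INR N + 1) * (S + 1))) by apply Rmin_r.
  assert (Hd0 : 0 < d) by (apply Rmin_pos; [lra|apply Rdiv_lt_0_compat; nra]).
  exists d. split; auto. intros z Hz.
  assert (Hz' : 0 <= z <= 1) by lra.
  pose proof (Series_pow_le_Series z He Hz') as Hup. rewrite (is_series_unique _ _ HS) in Hup.
  pose proof (Series_pow_ge_partial z N He Hz') as Hlow. fold T in Hlow.
  assert (Hloss : INR N * (1 - z) * T <= eps / 2).
  { apply Rle_trans with ((INR N + 1) * d * (S + 1)); [apply Rmult_le_compat; nra|].
    apply Rmult_le_compat_l with (r := 2 * (INR N + 1) * (S + 1)) in Hd2; [|nra].
    replace (2 * (INR N + 1) * (S + 1) * (eps / (2 * (INR N + 1) * (S + 1)))) with eps in Hd2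
      by (field; nra). nra. }
  apply Rabs_def1; lra.
Qed.

Lemma ex_series_pow_bounded (M : R) :
  (forall z, 0 < z < 1 -> ex_series (fun k => b k * z ^ k) /\ Series (fun k => b k * z ^ k) <= M) ->
  ex_series b /\ Series b <= M.
Proof.
  intros HM. apply ex_series_partial_bounded; auto. intro N.
  apply Rnot_lt_le; intro HT. set (T := sum_f_R0 b N) in *.
  assert (HT0 : 0 <= T) by (apply cond_pos_sum; auto).
  pose proof (pos_INR N) as HNp.
  set (d := Rmin (1 / 2) ((T - M) / (2 * (INR N + 1) * (T + 1)))).
  assert (Hd1 : d <= 1 / 2) by apply Rmin_l.
  assert (Hd2 : d <= (T - M) / (2 * (INR N + 1) * (T + 1))) by apply Rmin_r.
  assert (Hd0 : 0 < d) by (apply Rmin_pos; [lra|apply Rdiv_lt_0_compat; nra]).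
  destruct (HM (1 - d)) as [Hex Hle]; [lra|].
  assert (Hlow : (1 - INR N * (1 - (1 - d))) * T <= Series (fun k => b k * (1 - d) ^ k)).
  { apply Rle_trans with (sum_f_R0 (fun k => b k * (1 - d) ^ k) N).
    - apply Rle_trans with ((1 - d) ^ N * T); [|apply pow_mult_sum_le; lra].
      apply Rmult_le_compat_r; [lra|apply pow_ge_Bernoulli; lra].
    - apply sum_f_R0_le_Series; auto. intro k. apply pow_term_bounds; lra. }
  replace (1 - (1 - d)) with d in Hlow by ring.
  assert (Hloss : INR N * d * T <= (T - M) / 2).
  { apply Rle_trans with ((INR N + 1) * d * (T + 1)); [apply Rmult_le_compat; nra|].
    apply Rmult_le_compat_l with (r := 2 * (INR N + 1) * (T + 1)) in Hd2; [|nra].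
    replace (2 * (INR N + 1) * (T + 1) * ((T - M) / (2 * (INR N + 1) * (T + 1))))
      with (T - M) in Hd2 by (field; nra). nra. }
  nra.
Qed.

End NonnegPowerSeries.

Lemma conv_ge0 (p q : nat -> R) :
  (forall k, 0 <= p k) -> (forall k, 0 <= q k) -> forall n, 0 <= conv p q n.
Proof. intros Hp Hq n. apply cond_pos_sum. intro; apply Rmult_le_pos; auto. Qed.

Lemma dirac_ge0 (a n : nat) : 0 <= dirac a n.
Proof. unfold dirac. destruct (Nat.eqb n a); lra. Qed.

Lemma convpow_ge0 (p : nat -> R) : (forall k, 0 <= p k) -> forall j n, 0 <= convpow p j n.
Proof. intros Hp j. induction j; intro n; simpl; [apply dirac_ge0|apply conv_ge0; auto]. Qed.

Lemma is_series_conv_pow (a b : nat -> R) (z A B : R) :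
  (forall k, 0 <= a k) -> (forall k, 0 <= b k) -> 0 <= z ->
  is_series (fun k => a k * z ^ k) A -> is_series (fun k => b k * z ^ k) B ->
  is_series (fun n => conv a b n * z ^ n) (A * B).
Proof.
  intros Ha Hb Hz HA HB.
  assert (Hz' : forall n, 0 <= z ^ n) by (intro; apply pow_le; auto).
  eapply is_series_ext; [|apply (is_series_mult_pos _ _ _ _ HA HB)].
  2, 3: intro; apply Rmult_le_pos; auto.
  intro n. simpl. unfold conv. rewrite Rmult_comm, scal_sum. apply sum_eq. intros k Hk.
  replace (z ^ n) with (z ^ k * z ^ (n - k)) by (rewrite <- pow_add; f_equal; lia). ring.
Qed.

Lemma is_series_dirac_pow (a : nat) (z : R) : is_series (fun n => dirac a n * z ^ n) (z ^ a).
Proof.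
  replace (z ^ a) with (sum_f_R0 (fun n => dirac a n * z ^ n) a).
  - apply is_series_finite. intros k Hk. unfold dirac.
    replace (Nat.eqb k a) with false by (symmetry; apply Nat.eqb_neq; lia). ring.
  - destruct a; simpl; unfold dirac; rewrite Nat.eqb_refl; [ring|].
    rewrite (sum_eq _ (fun _ => 0)); [rewrite sum_cte; ring|].
    intros i Hi. replace (Nat.eqb i (S a)) with false by (symmetry; apply Nat.eqb_neq; lia). ring.
Qed.

Lemma is_series_convpow_pow (q : nat -> R) (z Q : R) : (forall k, 0 <= q k) -> 0 <= z ->
  is_series (fun k => q k * z ^ k) Q -> forall j, is_series (fun n => convpow q j n * z ^ n) (Q ^ j).
Proof.
  intros Hq Hz HQ j. induction j; simpl; [apply (is_series_dirac_pow 0)|].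
  apply is_series_conv_pow; auto. apply convpow_ge0; auto.
Qed.

Lemma is_series_compound_pow (w q : nat -> R) (z Q W : R) :
  (forall j, 0 <= w j) -> (forall k, 0 <= q k) -> 0 < z ->
  is_series (fun k => q k * z ^ k) Q -> is_series (fun j => w j * Q ^ j) W ->
  (forall n, ex_series (fun j => w j * convpow q j n)) /\
  is_series (fun n => compound w q n * z ^ n) W.
Proof.
  intros Hw Hq Hz HQ HW.
  destruct (is_series_swap_nonneg (fun j n => w j * (convpow q j n * z ^ n)) (fun j => w j * Q ^ j) W)
    as [H1 H2]; auto.
  - intros j n. apply Rmult_le_pos; auto.
    apply Rmult_le_pos; [apply convpow_ge0; auto|apply pow_le; lra].
  - intro j. apply is_series_mult_l. apply is_series_convpow_pow; auto. lra.
  - assert (Hzn : forall n, 0 < z ^ n) by (intro; apply pow_lt; auto).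
    split.
    + intro n. destruct (H1 n) as [l Hl].
      exists (l * / z ^ n). eapply is_series_ext; [|apply (is_series_scal_r (/ z ^ n) _ _ Hl)].
      intro j. simpl. field. specialize (Hzn n). lra.
    + eapply is_series_ext; [|apply H2]. intro n. simpl. unfold compound.
      rewrite <- Series_scal_r. apply Series_ext. intro j. ring.
Qed.

Definition CV_radius_ge1 (a : nat -> R) : Prop :=
  forall x, Rabs x < 1 -> Rbar_lt (Rabs x) (CV_radius a).

Lemma CV_radius_ge1_of_CV_disk (a : nat -> R) :
  (forall r, 0 < r < 1 -> CV_disk a r) -> CV_radius_ge1 a.
Proof.
  intros Hr x Hx.
  set (r := (Rabs x + 1) / 2).
  assert (Hr0 : 0 < r < 1) by (pose proof (Rabs_pos x); unfold r; lra).
  destruct (Lub_Rbar_correct (CV_disk a)) as [Hub _].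
  specialize (Hub r (Hr r Hr0)). fold (CV_radius a) in Hub.
  apply Rbar_lt_le_trans with (Finite r); auto. simpl. unfold r. lra.
Qed.

Lemma CV_radius_ge1_nonneg (a : nat -> R) : (forall k, 0 <= a k) ->
  (forall r, 0 < r < 1 -> ex_series (fun k => a k * r ^ k)) -> CV_radius_ge1 a.
Proof.
  intros Ha Hr. apply CV_radius_ge1_of_CV_disk. intros r Hr0. unfold CV_disk.
  eapply ex_series_ext; [|apply (Hr r Hr0)]. intro n.
  rewrite Rabs_pos_eq; auto. apply Rmult_le_pos; auto. apply pow_le; lra.
Qed.

Lemma CV_radius_ge1_minus (a b : nat -> R) : CV_radius_ge1 a -> CV_radius_ge1 b ->
  CV_radius_ge1 (fun k => a k - b k).
Proof.
  intros Ha Hb. apply CV_radius_ge1_of_CV_disk. intros r Hr0.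
  assert (Hr1 : Rabs r < 1) by (rewrite Rabs_pos_eq; lra).
  unfold CV_disk.
  apply (@ex_series_le R_AbsRing R_CompleteNormedModule _
           (fun n => Rabs (a n * r ^ n) + Rabs (b n * r ^ n))).
  - intro n. change norm with Rabs. simpl. rewrite Rabs_Rabsolu.
    replace ((a n - b n) * r ^ n) with (a n * r ^ n + - (b n * r ^ n)) by ring.
    eapply Rle_trans; [apply Rabs_triang|]. rewrite Rabs_Ropp. lra.
  - apply (@ex_series_plus R_AbsRing R_NormedModule); apply CV_disk_inside; auto.
Qed.

Lemma continuity_pt_0_of_zero_01 (f : R -> R) :
  continuity_pt f 0 -> (forall z, 0 < z < 1 -> f z = 0) -> f 0 = 0.
Proof.
  intros Hc Hz. destruct (Req_dec (f 0) 0) as [|Hne]; auto. exfalso.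
  destruct (Hc (Rabs (f 0))) as [al [Hal H]]; [apply Rabs_pos_lt; auto|].
  set (y := Rmin (al / 2) (1 / 2)).
  assert (0 < y) by (apply Rmin_pos; lra).
  assert (y <= al / 2) by apply Rmin_l. assert (y <= 1 / 2) by apply Rmin_r.
  specialize (H y). simpl in H. unfold R_dist in H. rewrite Hz in H by lra.
  rewrite Rminus_0_l, Rabs_Ropp in H. apply (Rlt_irrefl (Rabs (f 0))). apply H.
  split; [split; [constructor|lra]|]. rewrite Rminus_0_r, Rabs_pos_eq; lra.
Qed.

Lemma PSeries_zero_coef (n : nat) : forall e, CV_radius_ge1 e ->
  (forall z, 0 < z < 1 -> PSeries e z = 0) -> e n = 0.
Proof.
  assert (H0 : forall e, CV_radius_ge1 e -> (forall z, 0 < z < 1 -> PSeries e z = 0) -> e 0%nat = 0).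
  { intros e He Hz. rewrite <- PSeries_0. apply continuity_pt_0_of_zero_01; auto.
    apply PSeries_continuity. apply He. rewrite Rabs_R0; lra. }
  induction n; intros e He Hz; [apply H0; auto|].
  change (e (S n)) with (PS_decr_1 e n). apply IHn.
  - intros x Hx. rewrite CV_radius_decr_1. auto.
  - intros z Hzz. pose proof (PSeries_decr_1_aux e z (H0 e He Hz)) as H.
    rewrite Hz in H by auto. symmetry in H. apply Rmult_integral in H as [H|H]; auto. lra.
Qed.

Lemma pow_series_coef_unique (a b : nat -> R) : (forall k, 0 <= a k) -> (forall k, 0 <= b k) ->
  (forall z, 0 < z < 1 -> ex_series (fun k => a k * z ^ k)) ->
  (forall z, 0 < z < 1 -> ex_series (fun k => b k * z ^ k)) ->
  (forall z, 0 < z < 1 -> Series (fun k => a k * z ^ k) = Series (fun k => b k * z ^ k)) ->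
  forall n, a n = b n.
Proof.
  intros Ha Hb Ea Eb H n. apply Rminus_diag_uniq.
  apply (PSeries_zero_coef n (fun k => a k - b k)).
  { apply CV_radius_ge1_minus; apply CV_radius_ge1_nonneg; auto. }
  intros z Hz. rewrite PSeries_Series.
  rewrite (Series_ext _ (fun k => a k * z ^ k - b k * z ^ k)) by (intro; ring).
  rewrite Series_minus; auto. rewrite H; auto. ring.
Qed.

Definition poisson (lam : R) (j : nat) : R := exp (- lam) / INR (Factorial.fact j).

Lemma poisson_ge0 (lam : R) (j : nat) : 0 <= poisson lam j.
Proof. apply Rle_mult_inv_pos; [left; apply exp_pos|apply INR_fact_lt_0]. Qed.

Lemma is_series_poisson_pow (lam Q : R) :
  is_series (fun j => poisson lam j * Q ^ j) (exp (- lam) * exp Q).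
Proof.
  pose proof (is_exp_Reals Q) as H. apply is_pseries_R in H.
  eapply is_series_ext; [|apply (is_series_mult_l (exp (- lam)) _ _ H)].
  intro; unfold poisson; simpl; field. apply INR_fact_neq_0.
Qed.

Lemma exp_pow (x : R) (n : nat) : exp x ^ n = exp (INR n * x).
Proof.
  induction n; [simpl; rewrite Rmult_0_l, exp_0; auto|].
  rewrite S_INR. simpl. rewrite IHn, <- exp_plus. f_equal. ring.
Qed.

Lemma continuity_pt_pgf_nonneg (g : nat -> R) : (forall k, 0 <= g k) ->
  (forall z, 0 < z < 1 -> ex_series (fun k => g k * z ^ k)) ->
  forall x, Rabs x < 1 -> continuity_pt (pgf g) x.
Proof.
  intros Hg He x Hx. apply (continuity_pt_ext (PSeries g)); [intro y; apply PSeries_Series|].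
  apply PSeries_continuity. apply CV_radius_ge1_nonneg; auto.
Qed.

Section Distribution.
Variable p : nat -> R.
Hypothesis Hp : is_distr p.

Lemma distr_ge0 (k : nat) : 0 <= p k.
Proof. apply Hp. Qed.

Lemma distr_ex_series : ex_series p.
Proof. exists 1. apply Hp. Qed.

Lemma is_series_pgf (z : R) : 0 <= z <= 1 -> is_series (fun k => p k * z ^ k) (pgf p z).
Proof. intro Hz. apply Series_correct, ex_series_pow_01; auto. apply distr_ge0. apply distr_ex_series. Qed.

Lemma pgf_1 : pgf p 1 = 1.
Proof.
  unfold pgf. rewrite (Series_ext _ p) by (intro; rewrite pow1; ring).
  apply is_series_unique, Hp.
Qed.

Lemma pgf_bounds (z : R) : 0 <= z <= 1 -> 0 <= pgf p z <= 1.
Proof.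
  intro Hz. rewrite <- (is_series_unique _ _ (proj2 Hp)). split.
  - apply Series_ge0; [|eexists; apply is_series_pgf; auto].
    intro k. apply pow_term_bounds; auto. apply distr_ge0.
  - apply Series_pow_le_Series; auto. apply distr_ge0. apply distr_ex_series.
Qed.

Lemma tail_sum (k : nat) : tail p k = 1 - sum_f_R0 p k.
Proof.
  unfold tail. apply is_series_unique.
  eapply is_series_ext; [|apply (is_series_incr_n p (S k))].
  - intro j. simpl. f_equal. lia.
  - lia.
  - simpl. rewrite sum_n_Reals.
    match goal with |- is_series _ ?l => replace l with 1 by (unfold plus; simpl; ring) end.
    apply Hp.
Qed.

Lemma tail_ge0 (k : nat) : 0 <= tail p k.
Proof.
  rewrite tail_sum. rewrite <- (is_series_unique _ _ (proj2 Hp)).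
  pose proof (sum_f_R0_le_Series p k distr_ge0 distr_ex_series). lra.
Qed.

(* [tail p k = 1 - conv p (fun _ => 1) k], and [conv p (fun _ => 1)] has pgf [pgf p z / (1 - z)]. *)
Lemma phi_pgf (z : R) : 0 <= z < 1 -> phi p z = (1 - pgf p z) / (1 - z).
Proof.
  intro Hz. unfold phi. apply is_series_unique.
  assert (Hg : is_series (fun k => z ^ k) (/ (1 - z))) by (apply is_series_geom; rewrite Rabs_pos_eq; lra).
  assert (Hg' : is_series (fun k => 1 * z ^ k) (/ (1 - z))).
  { eapply is_series_ext; [|apply Hg]. intro; simpl; ring. }
  pose proof (is_series_conv_pow p (fun _ => 1) z (pgf p z) (/ (1 - z)) distr_ge0
                (fun _ => Rle_0_1) (proj1 Hz) (is_series_pgf z ltac:(lra)) Hg') as H.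
  replace ((1 - pgf p z) / (1 - z)) with (/ (1 - z) - pgf p z * / (1 - z)) by (field; lra).
  eapply is_series_ext; [|apply (is_series_minus _ _ _ _ Hg H)].
  intro n. simpl. rewrite tail_sum. unfold conv, plus, opp; simpl.
  rewrite (sum_eq _ p) by (intros; ring). ring.
Qed.

Lemma ex_series_mean_of_second_moment :
  finite_second_moment p -> ex_series (fun k => INR k * p k).
Proof.
  intros H2. apply (@ex_series_le R_AbsRing R_CompleteNormedModule _ (fun k => INR k ^ 2 * p k)); [|exact H2].
  intro n. change norm with Rabs. cbv beta. pose proof (distr_ge0 n). pose proof (pos_INR n).
  rewrite Rabs_pos_eq by nra.
  destruct (Nat.eq_dec n 0) as [->|Hn]; [simpl; lra|].
  assert (1 <= INR n) by (apply (le_INR 1); lia).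
  assert (INR n <= INR n ^ 2) by (simpl; nra). nra.
Qed.

Hypothesis Hm : ex_series (fun k => INR k * p k).

Lemma sum_f_R0_lt_indicator (n : nat) :
  sum_f_R0 (fun k => if Nat.ltb k n then p n else 0) n = INR n * p n.
Proof.
  destruct n; [simpl; ring|].
  rewrite tech5, Nat.ltb_irrefl, Rplus_0_r.
  rewrite (sum_eq _ (fun _ => p (S n))).
  - rewrite sum_cte. ring.
  - intros i Hi. replace (Nat.ltb i (S n)) with true by (symmetry; apply Nat.ltb_lt; lia). auto.
Qed.

(* [mean p = sum_k P{V > k}]: sum the indicator array [1_{k < n} p n] in both orders. *)
Lemma is_series_tail_mean : is_series (tail p) (mean p).
Proof.
  destruct (is_series_swap_nonneg (fun n k => if Nat.ltb k n then p n else 0)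
              (fun n => INR n * p n) (mean p)) as [_ H].
  - intros j n. destruct (Nat.ltb n j); [apply distr_ge0|lra].
  - intro n. rewrite <- sum_f_R0_lt_indicator. apply is_series_finite. intros k Hk.
    replace (Nat.ltb k n) with false by (symmetry; apply Nat.ltb_ge; lia). auto.
  - apply Series_correct; auto.
  - eapply is_series_ext; [|apply H]. intro k. simpl. unfold tail.
    rewrite (Series_incr_n _ (S k)); [|lia|].
    + rewrite (sum_eq _ (fun _ => 0)).
      * rewrite sum_cte, Rmult_0_l, Rplus_0_l. apply Series_ext. intro n.
        replace (Nat.ltb k (S k + n)) with true by (symmetry; apply Nat.ltb_lt; lia).
        f_equal. lia.
      * intros i Hi. replace (Nat.ltb k i) with false by (symmetry; apply Nat.ltb_ge; lia). auto.
    + apply (@ex_series_le R_AbsRing R_CompleteNormedModule _ p); [|apply distr_ex_series].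
      intro n. change norm with Rabs. simpl. pose proof (distr_ge0 n).
      destruct (Nat.ltb k n); rewrite Rabs_pos_eq; lra.
Qed.

Lemma mean_ge0 : 0 <= mean p.
Proof.
  rewrite <- (is_series_unique _ _ is_series_tail_mean).
  apply Series_ge0; [apply tail_ge0|exists (mean p); apply is_series_tail_mean].
Qed.

Lemma is_series_phi (z : R) : 0 <= z <= 1 -> is_series (fun k => tail p k * z ^ k) (phi p z).
Proof.
  intro Hz. apply Series_correct, ex_series_pow_01; auto.
  apply tail_ge0. exists (mean p); apply is_series_tail_mean.
Qed.

Lemma phi_bounds (z : R) : 0 <= z <= 1 -> 0 <= phi p z <= mean p.
Proof.
  intro Hz. rewrite <- (is_series_unique _ _ is_series_tail_mean). split.
  - apply Series_ge0; [|eexists; apply is_series_phi; auto].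
    intro k. apply pow_term_bounds; auto. apply tail_ge0.
  - apply Series_pow_le_Series; auto. apply tail_ge0. exists (mean p); apply is_series_tail_mean.
Qed.

Lemma phi_left_lim (eps : R) : 0 < eps ->
  exists d, 0 < d /\ forall z, 1 - d < z <= 1 -> Rabs (phi p z - mean p) < eps.
Proof. apply Series_pow_left_lim. apply tail_ge0. apply is_series_tail_mean. Qed.

Lemma phi_Rabs (s : R) : Rabs s <= 1 -> Rabs (phi p s) <= mean p.
Proof.
  intro Hs. apply Rle_trans with (phi p (Rabs s)); [|apply phi_bounds; split; auto; apply Rabs_pos].
  unfold phi.
  assert (E : forall k, Rabs (tail p k * s ^ k) = tail p k * Rabs s ^ k).
  { intro k. rewrite Rabs_mult, Rabs_pos_eq by apply tail_ge0. rewrite RPow_abs. auto. }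
  rewrite <- (Series_ext _ _ E). apply Series_Rabs.
  apply (ex_series_ext (fun k => tail p k * Rabs s ^ k)); [intro; rewrite E; auto|].
  eexists. apply is_series_phi. split; auto. apply Rabs_pos.
Qed.

Lemma continuity_pt_phi (s : R) : Rabs s < 1 -> continuity_pt (phi p) s.
Proof.
  intro Hs. apply (continuity_pt_ext (PSeries (tail p))); [intro x; apply PSeries_Series|].
  apply PSeries_continuity. apply CV_radius_ge1_nonneg; auto; [apply tail_ge0|].
  intros r Hr. eexists. apply is_series_phi. lra.
Qed.

End Distribution.

Lemma locally_Rabs (x d : R) (P : R -> Prop) :
  0 < d -> (forall y, Rabs (y - x) < d -> P y) -> locally x P.
Proof. intros Hd H. exists (mkposreal d Hd). intros y Hy. apply H. exact Hy. Qed.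

Lemma div_one_minus_near (a b : R) : b < 1 -> forall eps, 0 < eps -> exists eta, 0 < eta /\
  forall u v, Rabs (u - a) < eta -> Rabs (v - b) < eta -> Rabs (u / (1 - v) - a / (1 - b)) < eps.
Proof.
  intros Hb eps He. set (D := 1 - b). assert (HD : 0 < D) by (unfold D; lra).
  set (K := D + Rabs a + 1). pose proof (Rabs_pos a) as Ha0.
  assert (HK : 0 < K) by (unfold K; lra).
  set (eta := Rmin (D / 2) (eps * D * D / (2 * K))).
  assert (E1 : eta <= D / 2) by apply Rmin_l.
  assert (E2 : eta <= eps * D * D / (2 * K)) by apply Rmin_r.
  exists eta. split; [apply Rmin_pos; [lra|apply Rdiv_lt_0_compat; [repeat apply Rmult_lt_0_compat|]; lra]|].
  intros u v Hu Hv.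
  assert (Hn : Rabs ((u - a) * D + a * (v - b)) < eta * K).
  { eapply Rle_lt_trans; [apply Rabs_triang|]. rewrite !Rabs_mult, (Rabs_pos_eq D) by lra.
    pose proof (Rabs_pos (v - b)). pose proof (Rabs_pos (u - a)). unfold K. nra. }
  assert (HeK : eta * K <= eps * D * D / 2).
  { apply Rmult_le_compat_r with (r := K) in E2; [|lra].
    replace (eps * D * D / (2 * K) * K) with (eps * D * D / 2) in E2 by (field; lra). lra. }
  apply Rabs_def2 in Hv.
  assert (Hv1 : D / 2 < 1 - v) by (unfold D in *; lra).
  replace (u / (1 - v) - a / D) with (((u - a) * D + a * (v - b)) / ((1 - v) * D)) by (unfold D; field; lra).
  rewrite Rabs_div by nra. rewrite (Rabs_pos_eq ((1 - v) * D)) by nra.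
  apply Rlt_div_l; [nra|].
  assert (eps * D * D / 2 < eps * ((1 - v) * D)).
  { replace (eps * D * D / 2) with (eps * (D / 2 * D)) by field.
    apply Rmult_lt_compat_l; [lra|]. apply Rmult_lt_compat_r; lra. }
  lra.
Qed.

Definition diff_quotient_lim01 (h : R -> R) (z l : R) : Prop :=
  filterlim (fun y => (h y - h z) / (y - z))
    (within (fun y => 0 <= y <= 1 /\ y <> z) (locally z)) (locally l).

Lemma diff_quotient_lim01_of_is_derive (f h : R -> R) (z l : R) : is_derive f z l ->
  (forall y, 0 <= y <= 1 -> f y = h y) -> 0 <= z <= 1 -> diff_quotient_lim01 h z l.
Proof.
  intros Hd Hfh Hz. apply is_derive_Reals in Hd.
  apply filterlim_locally. intros eps. unfold within.
  destruct (Hd eps (cond_pos eps)) as [delta Hdel].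
  exists delta. intros y Hy [Hy01 Hyz].
  change (Rabs ((h y - h z) / (y - z) - l) < eps).
  change (Rabs (y - z) < delta) in Hy.
  rewrite <- !Hfh by auto.
  specialize (Hdel (y - z)). rewrite (Rplus_minus z y) in Hdel.
  apply Hdel; auto. intro E. apply Hyz. lra.
Qed.

Lemma is_derive_of_diff_quotient_lim01 (h : R -> R) (z l : R) : 0 < z < 1 ->
  diff_quotient_lim01 h z l -> is_derive h z l.
Proof.
  intros Hz H. apply is_derive_Reals. intros eps He.
  assert (Hb : locally l (ball l (mkposreal eps He))) by (exists (mkposreal eps He); auto).
  destruct (H _ Hb) as [d Hd].
  assert (Hp : 0 < Rmin d (Rmin z (1 - z))) by (apply Rmin_pos; [apply cond_pos|apply Rmin_pos; lra]).
  exists (mkposreal _ Hp). intros hh Hh0 Hhd. simpl in Hhd.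
  pose proof (Rmin_l d (Rmin z (1 - z))). pose proof (Rmin_r d (Rmin z (1 - z))).
  pose proof (Rmin_l z (1 - z)). pose proof (Rmin_r z (1 - z)).
  apply Rabs_def2 in Hhd as Hh'.
  specialize (Hd (z + hh)). replace (z + hh - z) with hh in Hd by ring.
  apply Hd.
  - change (Rabs (z + hh - z) < d). replace (z + hh - z) with hh by ring. lra.
  - split; [lra|]. intro E. apply Hh0. lra.
Qed.

Definition continuous_from_01 (f : R -> R) (x : R) : Prop :=
  forall eps, 0 < eps -> exists d, 0 < d /\
    forall y, 0 < y < 1 -> Rabs (y - x) < d -> Rabs (f y - f x) < eps.

Lemma continuous_from_01_of_continuity_pt (f : R -> R) (x : R) :
  continuity_pt f x -> continuous_from_01 f x.
Proof.
  intros H eps He. destruct (H eps He) as [d [Hd H2]]. exists d. split; auto.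
  intros y _ Hy. destruct (Req_dec y x) as [->|Hne]; [rewrite Rminus_diag, Rabs_R0; lra|].
  apply (H2 y). split; [split; [constructor|auto]|exact Hy].
Qed.

Lemma continuous_from_01_of_diff_quotient_lim01 (h : R -> R) (z l : R) :
  diff_quotient_lim01 h z l -> continuous_from_01 h z.
Proof.
  intros H eps He.
  assert (Hb : locally l (ball l (mkposreal 1 Rlt_0_1))) by (exists (mkposreal 1 Rlt_0_1); auto).
  destruct (H _ Hb) as [d Hd].
  set (K := Rabs l + 1). assert (HK : 0 < K) by (unfold K; pose proof (Rabs_pos l); lra).
  exists (Rmin d (eps / K)). split; [apply Rmin_pos; [apply cond_pos|apply Rdiv_lt_0_compat; lra]|].
  intros y Hy Hyz. pose proof (Rmin_l d (eps / K)). pose proof (Rmin_r d (eps / K)).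
  destruct (Req_dec y z) as [->|Hne]; [rewrite Rminus_diag, Rabs_R0; lra|].
  assert (Hq : Rabs ((h y - h z) / (y - z) - l) < 1).
  { apply Hd; [change (Rabs (y - z) < d); lra|split; auto; lra]. }
  assert (Hq' : Rabs ((h y - h z) / (y - z)) < K).
  { pose proof (Rabs_triang ((h y - h z) / (y - z) - l) l) as Ht.
    replace ((h y - h z) / (y - z) - l + l) with ((h y - h z) / (y - z)) in Ht by ring.
    unfold K. lra. }
  replace (h y - h z) with ((h y - h z) / (y - z) * (y - z)) by (field; lra).
  rewrite Rabs_mult.
  apply Rle_lt_trans with (K * Rabs (y - z)); [apply Rmult_le_compat_r; [apply Rabs_pos|lra]|].
  replace eps with (K * (eps / K)) by (field; lra). apply Rmult_lt_compat_l; lra.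
Qed.

Lemma continuous_from_01_eq (f g : R -> R) (x : R) : 0 <= x <= 1 ->
  continuous_from_01 f x -> continuous_from_01 g x ->
  (forall y, 0 < y < 1 -> f y = g y) -> f x = g x.
Proof.
  intros Hx Hf Hg Hfg.
  apply Rminus_diag_uniq, Rabs_eq_0, Rle_antisym; [|apply Rabs_pos].
  apply Rnot_lt_le. intro Hpos.
  set (eps := Rabs (f x - g x) / 2).
  destruct (Hf eps) as [d1 [Hd1 H1]]; [unfold eps; lra|].
  destruct (Hg eps) as [d2 [Hd2 H2]]; [unfold eps; lra|].
  set (s := Rmin 1 (Rmin d1 d2) / 2).
  pose proof (Rmin_l 1 (Rmin d1 d2)). pose proof (Rmin_r 1 (Rmin d1 d2)).
  pose proof (Rmin_l d1 d2). pose proof (Rmin_r d1 d2).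
  assert (Hs0 : 0 < s) by (unfold s; apply Rdiv_lt_0_compat; [apply Rmin_pos; [lra|apply Rmin_pos; auto]|lra]).
  set (y := x + s * (1 / 2 - x)).
  assert (Hy : 0 < y < 1) by (unfold y, s in *; nra).
  assert (Hyx : Rabs (y - x) <= s / 2).
  { unfold y. replace (x + s * (1 / 2 - x) - x) with (s * (1 / 2 - x)) by ring.
    rewrite Rabs_mult, Rabs_pos_eq by lra.
    assert (Rabs (1 / 2 - x) <= 1 / 2) by (apply Rabs_le; lra). nra. }
  specialize (H1 y Hy ltac:(unfold s in *; lra)). specialize (H2 y Hy ltac:(unfold s in *; lra)).
  rewrite Hfg in H1 by auto.
  pose proof (Rabs_triang (g y - f x) (g x - g y)) as Ht.
  replace (g y - f x + (g x - g y)) with (- (f x - g x)) in Ht by ring.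
  rewrite Rabs_Ropp in Ht. rewrite Rabs_minus_sym in H2. unfold eps in *. lra.
Qed.

Section StationaryEquation.
Variables (pX pY : nat -> R) (b1 b2 : R).
Hypotheses (HX : is_distr pX) (HY : is_distr pY)
  (HmX : ex_series (fun k => INR k * pX k)) (HmY : ex_series (fun k => INR k * pY k))
  (Hb1 : 0 < b1) (Hb2 : 0 < b2) (HYnd : 0 < mean pY)
  (Hcrit : b1 * (mean pX - 1) + b2 * mean pY = 0).

Definition F1 : R := mean pY / (1 - mean pX).

Lemma mean_X_lt1 : mean pX < 1.
Proof. nra. Qed.

Lemma F1_eq : F1 = b1 / b2.
Proof. unfold F1. pose proof mean_X_lt1. field_simplify_eq; [nra|lra]. Qed.

Lemma F1_gt0 : 0 < F1.
Proof. rewrite F1_eq. apply Rdiv_lt_0_compat; auto. Qed.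

Lemma one_minus_phi_X_gt0 (s : R) : Rabs s <= 1 -> 0 < 1 - phi pX s.
Proof.
  intro Hs. pose proof (phi_Rabs pX HX HmX s Hs). pose proof mean_X_lt1.
  pose proof (Rle_abs (phi pX s)). lra.
Qed.

Definition Fquot (s : R) : R := phi pY s / (1 - phi pX s).

(* The integrand [(1 - pY(s)) / (pX(s) - s)] of [ghat], extended by its limit [F1] on [1, +oo). *)
Definition F (s : R) : R := if Rlt_dec s 1 then Fquot s else F1.

Lemma F_lt1 (s : R) : s < 1 -> F s = Fquot s.
Proof. intro. unfold F. destruct (Rlt_dec s 1); [auto|lra]. Qed.

Lemma F_ge1 (s : R) : 1 <= s -> F s = F1.
Proof. intro. unfold F. destruct (Rlt_dec s 1); [lra|auto]. Qed.

Lemma F_pgf (s : R) : 0 <= s < 1 -> F s = (1 - pgf pY s) / (pgf pX s - s) /\ 0 < pgf pX s - s.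
Proof.
  intro Hs. rewrite F_lt1 by lra. unfold Fquot.
  pose proof (phi_pgf pX HX s Hs) as EX. pose proof (phi_pgf pY HY s Hs) as EY.
  pose proof (one_minus_phi_X_gt0 s ltac:(rewrite Rabs_pos_eq; lra)) as Hd.
  assert (EX' : pgf pX s = 1 - (1 - s) * phi pX s) by (rewrite EX; field; lra).
  assert (EY' : pgf pY s = 1 - (1 - s) * phi pY s) by (rewrite EY; field; lra).
  assert (Hp : 0 < pgf pX s - s) by (rewrite EX'; nra).
  split; auto. rewrite EX', EY'. field. split; lra.
Qed.

Lemma continuity_pt_Fquot (s : R) : Rabs s < 1 -> continuity_pt Fquot s.
Proof.
  intro Hs. apply continuity_pt_div.
  - apply continuity_pt_phi; auto.
  - apply continuity_pt_minus; [apply continuity_pt_const; intros a b; auto|].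
    apply continuity_pt_phi; auto.
  - pose proof (one_minus_phi_X_gt0 s ltac:(lra)). lra.
Qed.

(* Abel's theorem for both tail series, using [mean pX < 1]. *)
Lemma continuity_pt_F_at_1 : continuity_pt F 1.
Proof.
  intros eps He. simpl. unfold R_dist.
  destruct (div_one_minus_near (mean pY) (mean pX) mean_X_lt1 eps He) as [eta [Heta Hq]].
  destruct (phi_left_lim pY HY HmY eta Heta) as [d1 [Hd1 H1]].
  destruct (phi_left_lim pX HX HmX eta Heta) as [d2 [Hd2 H2]].
  exists (Rmin d1 d2). split; [apply Rmin_pos; auto|].
  intros x [_ Hx]. pose proof (Rmin_l d1 d2). pose proof (Rmin_r d1 d2).
  rewrite (F_ge1 1) by lra. apply Rabs_def2 in Hx.
  destruct (Rlt_dec x 1).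
  - rewrite F_lt1 by auto. apply Hq; [apply H1|apply H2]; lra.
  - rewrite F_ge1 by lra. rewrite Rminus_diag, Rabs_R0. auto.
Qed.

Lemma continuous_F (s : R) : -1 < s -> continuous F s.
Proof.
  intro Hs. destruct (Rlt_le_dec s 1) as [Hs1|Hs1].
  - apply (continuous_ext_loc F Fquot).
    + apply (locally_Rabs s (Rmin (1 - s) (s + 1))); [apply Rmin_pos; lra|].
      intros y Hy. pose proof (Rmin_l (1 - s) (s + 1)). apply Rabs_def2 in Hy. rewrite F_lt1; lra.
    + apply continuity_pt_filterlim, continuity_pt_Fquot. apply Rabs_def1; lra.
  - destruct (Req_dec s 1) as [->|Hne]; [apply continuity_pt_filterlim, continuity_pt_F_at_1|].
    apply (continuous_ext_loc F (fun _ => F1)); [|apply filterlim_const].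
    apply (locally_Rabs s (s - 1)); [lra|]. intros y Hy. apply Rabs_def2 in Hy. rewrite F_ge1; lra.
Qed.

Lemma F_bounds (s : R) : 0 <= s <= 1 -> 0 <= F s <= F1.
Proof.
  intro Hs. pose proof F1_gt0. destruct (Rlt_dec s 1).
  - rewrite F_lt1 by auto. unfold Fquot, F1.
    pose proof (phi_bounds pY HY HmY s Hs). pose proof (phi_bounds pX HX HmX s Hs).
    pose proof mean_X_lt1. split; [apply Rle_mult_inv_pos; lra|].
    unfold Rdiv. apply Rmult_le_compat; [lra|left; apply Rinv_0_lt_compat; lra|lra|].
    apply Rinv_le_contravar; lra.
  - rewrite F_ge1 by lra. lra.
Qed.

Definition intF (z : R) : R := RInt F z 1.

Lemma ex_RInt_F (a b : R) : -1 < a -> -1 < b -> ex_RInt F a b.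
Proof.
  intros Ha Hb. apply (@ex_RInt_continuous R_CompleteNormedModule). intros z Hz. apply continuous_F.
  unfold Rmin in Hz. destruct (Rle_dec a b); lra.
Qed.

Lemma is_derive_intF (z : R) : -1 < z -> is_derive intF z (- F z).
Proof.
  intro Hz. apply (is_derive_RInt' F intF z 1); [|apply continuous_F; auto].
  apply (locally_Rabs z (z + 1)); [lra|]. intros y Hy. apply Rabs_def2 in Hy.
  apply (@RInt_correct R_CompleteNormedModule). apply ex_RInt_F; lra.
Qed.

Lemma intF_ge0 (z : R) : 0 <= z <= 1 -> 0 <= intF z.
Proof.
  intro Hz. apply RInt_ge_0; [lra|apply ex_RInt_F; lra|]. intros x Hx. apply F_bounds. lra.
Qed.

Lemma intF_split (z : R) : 0 <= z <= 1 -> intF z = RInt F 0 1 - RInt F 0 z.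
Proof.
  intro Hz. unfold intF.
  assert (E : RInt F 0 z + RInt F z 1 = RInt F 0 1)
    by (apply (@RInt_Chasles R_CompleteNormedModule); apply ex_RInt_F; lra).
  lra.
Qed.

Definition G (c z : R) : R := exp (- (c * intF z)).

Lemma is_derive_G (c z : R) : -1 < z -> is_derive (G c) z (G c z * (c * F z)).
Proof.
  intro Hz.
  pose proof (is_derive_comp exp (fun x => opp (c * intF x)) z _ _ (is_derive_exp _)
    (is_derive_opp _ _ _ (is_derive_scal intF z c _ (is_derive_intF z Hz)))) as H.
  unfold G. replace (exp (- (c * intF z)) * (c * F z)) with (scal (opp (c * - F z)) (exp (opp (c * intF z)))).
  - exact H.
  - unfold scal, opp; simpl; unfold mult; simpl. ring.
Qed.

Lemma continuity_pt_G (c z : R) : -1 < z -> continuity_pt (G c) z.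
Proof.
  intro Hz. apply continuity_pt_filterlim, (@ex_derive_continuous R_AbsRing R_NormedModule).
  eexists. apply is_derive_G; auto.
Qed.

Lemma G_1 (c : R) : G c 1 = 1.
Proof. unfold G, intF. rewrite RInt_point. unfold zero; simpl. rewrite Rmult_0_r, Ropp_0. apply exp_0. Qed.

Lemma G_bounds (c z : R) : 0 <= c -> 0 <= z <= 1 -> 0 < G c z <= 1.
Proof.
  intros Hc Hz. unfold G. split; [apply exp_pos|].
  rewrite <- exp_0. assert (0 <= c * intF z) by (apply Rmult_le_pos; auto; apply intF_ge0; auto).
  destruct (Req_dec (c * intF z) 0) as [E|E]; [rewrite E, Ropp_0; lra|].
  left. apply exp_increasing. lra.
Qed.

Lemma ghat_G (m0 z : R) : 0 <= z <= 1 -> ghat pX pY b1 b2 m0 z = G (m0 * (b2 / b1)) z.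
Proof.
  intro Hz. unfold ghat, G, intF. do 3 f_equal. apply RInt_ext. intros x Hx.
  rewrite Rmin_left, Rmax_right in Hx by lra. symmetry. apply F_pgf. lra.
Qed.

Lemma continuity_pt_G_derivative (c z : R) : -1 < z -> continuity_pt (fun z => G c z * (c * F z)) z.
Proof.
  intro Hz. apply continuity_pt_mult; [apply continuity_pt_G; auto|].
  apply continuity_pt_mult; [apply continuity_pt_const; intros a b; reflexivity|].
  apply continuity_pt_filterlim, continuous_F; auto.
Qed.

Lemma ghat_solves (m0 : R) : exists dg : R -> R,
  C1_on01 (ghat pX pY b1 b2 m0) dg /\ solves_stationary pX pY b1 b2 m0 (ghat pX pY b1 b2 m0) dg.
Proof.
  set (c := m0 * (b2 / b1)).
  exists (fun z => G c z * (c * F z)). split; [split|].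
  - intros z Hz. apply (diff_quotient_lim01_of_is_derive (G c)); [apply is_derive_G; lra| |auto].
    intros y Hy. rewrite ghat_G; auto.
  - intros z Hz. apply (filterlim_filter_le_1 _ (filter_le_within _)).
    exact (proj1 (continuity_pt_filterlim (fun z => G c z * (c * F z)) z)
             (continuity_pt_G_derivative c z ltac:(lra))).
  - intros z Hz. rewrite ghat_G by auto. fold c.
    destruct (Rlt_dec z 1).
    + destruct (F_pgf z ltac:(lra)) as [E Hp]. rewrite E. unfold c. field. lra.
    + replace z with 1 by lra. rewrite !pgf_1 by auto. ring.
Qed.

Lemma stationary_derivative (m0 : R) (h dh : R -> R) (y : R) :
  solves_stationary pX pY b1 b2 m0 h dh -> 0 < y < 1 -> dh y = m0 * (b2 / b1) * F y * h y.
Proof.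
  intros Hs Hy. specialize (Hs y ltac:(lra)).
  destruct (F_pgf y ltac:(lra)) as [EF Hp]. rewrite EF.
  assert (Hne : b1 * (pgf pX y - y) <> 0) by nra.
  replace (dh y) with ((b1 * (pgf pX y - y) * dh y) / (b1 * (pgf pX y - y))) by (field; repeat split; lra).
  replace (b1 * (pgf pX y - y) * dh y) with (- (m0 * b2 * (pgf pY y - 1) * h y)) by lra.
  field. lra.
Qed.

(* Integrating factor: [h * exp (c * intF)] has zero derivative on (0, 1). *)
Lemma stationary_solution_mult_G (m0 : R) (h dh : R -> R) :
  C1_on01 h dh -> solves_stationary pX pY b1 b2 m0 h dh ->
  exists v, forall y, 0 < y < 1 -> h y = v * G (m0 * (b2 / b1)) y.
Proof.
  intros [Hq _] Hs. set (c := m0 * (b2 / b1)).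
  set (u := fun y => h y * exp (c * intF y)).
  assert (Hu : forall y, 0 < y < 1 -> is_derive u y 0).
  { intros y Hy.
    assert (Hh : is_derive h y (dh y)) by (apply is_derive_of_diff_quotient_lim01; auto; apply Hq; lra).
    pose proof (is_derive_comp exp (fun x => c * intF x) y _ _ (is_derive_exp _)
                  (is_derive_scal intF y c _ (is_derive_intF y ltac:(lra)))) as HE.
    pose proof (is_derive_mult h _ y _ _ Hh HE (fun a b => Rmult_comm a b)) as Hm.
    replace 0 with (plus (mult (dh y) (exp (c * intF y))) (mult (h y) (scal (c * - F y) (exp (c * intF y))))).
    - exact Hm.
    - unfold plus, mult, scal; simpl; unfold mult; simpl.
      rewrite (stationary_derivative m0 h dh y Hs Hy). fold c. ring. }
  exists (u (1 / 2)). intros y Hy.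
  assert (Huy : u y = u (1 / 2)).
  { destruct (MVT_gen u y (1 / 2) (fun _ => 0)) as [x [Hx Hx2]]; [| |lra].
    - intros x Hx. apply Hu. unfold Rmin, Rmax in Hx. destruct (Rle_dec y (1 / 2)); lra.
    - intros x Hx. apply continuity_pt_filterlim, (@ex_derive_continuous R_AbsRing R_NormedModule).
      eexists. apply Hu. unfold Rmin, Rmax in Hx. destruct (Rle_dec y (1 / 2)); lra. }
  rewrite <- Huy. unfold u, G. fold c.
  rewrite Rmult_assoc, <- exp_plus. replace (c * intF y + - (c * intF y)) with 0 by ring.
  rewrite exp_0. ring.
Qed.

Lemma stationary_unique (m0 : R) (h dh : R -> R) :
  C1_on01 h dh -> h 1 = 1 -> solves_stationary pX pY b1 b2 m0 h dh ->
  forall z, 0 <= z <= 1 -> h z = ghat pX pY b1 b2 m0 z.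
Proof.
  intros HC H1 Hs. set (c := m0 * (b2 / b1)).
  destruct (stationary_solution_mult_G m0 h dh HC Hs) as [v Hhv]. fold c in Hhv.
  assert (Hlim : forall x, 0 <= x <= 1 -> h x = v * G c x).
  { intros x Hx. apply (continuous_from_01_eq h (fun y => v * G c y) x Hx); auto.
    - apply (continuous_from_01_of_diff_quotient_lim01 h x (dh x)). apply HC; auto.
    - apply continuous_from_01_of_continuity_pt, continuity_pt_scal, continuity_pt_G. lra. }
  assert (Hv1 : v = 1) by (pose proof (Hlim 1 ltac:(lra)) as E; rewrite G_1, H1 in E; lra).
  intros z Hz. rewrite ghat_G by auto. fold c. rewrite Hlim, Hv1 by auto. ring.
Qed.

(* Coefficients of [1 / (1 - phi pX) = sum_j (phi pX)^j]. *)
Definition renewal : nat -> R := compound (fun _ => 1) (tail pX).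

Lemma is_series_renewal (s : R) : 0 < s < 1 ->
  (forall k, ex_series (fun j => 1 * convpow (tail pX) j k)) /\
  is_series (fun k => renewal k * s ^ k) (/ (1 - phi pX s)).
Proof.
  intro Hs. pose proof (phi_bounds pX HX HmX s ltac:(lra)). pose proof mean_X_lt1.
  apply (is_series_compound_pow _ _ s (phi pX s)); [intro; lra|apply tail_ge0; auto|lra|apply is_series_phi; auto; lra|].
  eapply is_series_ext; [|apply is_series_geom; rewrite Rabs_pos_eq; lra]. intro; simpl; ring.
Qed.

Lemma renewal_ge0 (k : nat) : 0 <= renewal k.
Proof.
  apply Series_ge0; [|apply (is_series_renewal (1 / 2) ltac:(lra))].
  intro j. rewrite Rmult_1_l. apply convpow_ge0, tail_ge0; auto.
Qed.

Definition Fcoef : nat -> R := conv (tail pY) renewal.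

Lemma Fcoef_ge0 (k : nat) : 0 <= Fcoef k.
Proof. apply conv_ge0; [apply tail_ge0; auto|apply renewal_ge0]. Qed.

Lemma is_series_Fcoef (s : R) : 0 < s < 1 -> is_series (fun k => Fcoef k * s ^ k) (F s).
Proof.
  intro Hs. rewrite F_lt1 by lra. apply is_series_conv_pow;
    [apply tail_ge0; auto|apply renewal_ge0|lra|apply is_series_phi; auto; lra|apply is_series_renewal; auto].
Qed.

Lemma CV_radius_ge1_Fcoef : CV_radius_ge1 Fcoef.
Proof.
  apply CV_radius_ge1_nonneg; [apply Fcoef_ge0|]. intros r Hr. eexists. apply is_series_Fcoef; auto.
Qed.

Definition Icoef (c : R) (n : nat) : R := c * PS_Int Fcoef n.

Lemma Icoef_ge0 (c : R) (n : nat) : 0 <= c -> 0 <= Icoef c n.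
Proof.
  intro Hc. apply Rmult_le_pos; auto. destruct n; [simpl; lra|].
  change (PS_Int Fcoef (S n)) with (Fcoef n / INR (S n)). apply Rle_mult_inv_pos; [apply Fcoef_ge0|apply lt_0_INR; lia].
Qed.

Lemma is_series_Icoef_pow (c z : R) : 0 < z < 1 ->
  is_series (fun k => Icoef c k * z ^ k) (c * RInt F 0 z).
Proof.
  intro Hz. assert (Hzr : Rabs z < 1) by (rewrite Rabs_pos_eq; lra).
  assert (Hr : Rbar_lt (Rabs z) (CV_radius (PS_Int Fcoef)))
    by (rewrite CV_radius_Int; apply CV_radius_ge1_Fcoef; auto).
  assert (E : RInt F 0 z = PSeries (PS_Int Fcoef) z).
  { rewrite <- RInt_PSeries by (apply CV_radius_ge1_Fcoef; auto). apply RInt_ext.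
    intros x Hx. rewrite Rmin_left, Rmax_right in Hx by lra.
    rewrite PSeries_Series. symmetry. apply is_series_unique, is_series_Fcoef. lra. }
  rewrite E, PSeries_Series. unfold Icoef.
  eapply is_series_ext; [|apply is_series_mult_l, Series_correct].
  - intro; simpl; ring.
  - destruct (CV_radius_inside _ _ Hr) as [l Hl]. exists l. apply is_pseries_R; auto.
Qed.

(* The coefficients of [c * int_0^z F] are summable at [z = 1] by monotone convergence. *)
Lemma is_series_Icoef (c : R) : 0 < c -> is_series (Icoef c) (c * RInt F 0 1).
Proof.
  intro Hc. set (lam := c * RInt F 0 1).
  assert (Hps : forall z, 0 < z < 1 -> Series (fun k => Icoef c k * z ^ k) = lam - c * intF z).
  { intros z Hz. rewrite (is_series_unique _ _ (is_series_Icoef_pow c z Hz)), intF_split by lra.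
    unfold lam. ring. }
  destruct (ex_series_pow_bounded (Icoef c) (fun n => Icoef_ge0 c n ltac:(lra)) lam) as [He Hle].
  { intros z Hz. split; [eexists; apply is_series_Icoef_pow; auto|].
    rewrite Hps by auto. pose proof (intF_ge0 z ltac:(lra)). assert (0 <= c * intF z) by (apply Rmult_le_pos; lra).
    lra. }
  assert (Hge : lam <= Series (Icoef c)).
  { set (S := Series (Icoef c)) in *. apply Rnot_lt_le. intro Hlt.
    assert (HIc : continuity_pt intF 1).
    { apply continuity_pt_filterlim, (@ex_derive_continuous R_AbsRing R_NormedModule).
      eexists. apply is_derive_intF. lra. }
    destruct (HIc ((lam - S) / (2 * c))) as [d [Hd Hd2]]; [apply Rdiv_lt_0_compat; lra|].
    set (z := Rmax (1 / 2) (1 - d / 2)).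
    assert (Hz : 0 < z < 1) by (unfold z, Rmax; destruct (Rle_dec (1 / 2) (1 - d / 2)); lra).
    assert (Hzd : Rabs (z - 1) < d) by (apply Rabs_def1; unfold z, Rmax; destruct (Rle_dec (1 / 2) (1 - d / 2)); lra).
    assert (Hd3 : Rabs (intF z - intF 1) < (lam - S) / (2 * c)).
    { apply Hd2. split; [split; [constructor|lra]|exact Hzd]. }
    unfold intF at 2 in Hd3. rewrite RInt_point in Hd3. unfold zero in Hd3; simpl in Hd3.
    rewrite Rminus_0_r in Hd3. apply Rabs_def2 in Hd3.
    assert (Series (fun k => Icoef c k * z ^ k) <= S)
      by (apply Series_pow_le_Series; auto; [intro; apply Icoef_ge0|]; lra).
    assert (c * intF z < c * ((lam - S) / (2 * c))) by (apply Rmult_lt_compat_l; lra).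
    replace (c * ((lam - S) / (2 * c))) with ((lam - S) / 2) in H0 by (field; lra).
    rewrite Hps in H by auto. lra. }
  replace lam with (Series (Icoef c)) by lra. apply Series_correct; auto.
Qed.

Definition Gcoef (c : R) : nat -> R := compound (poisson (c * RInt F 0 1)) (Icoef c).

Lemma is_series_Gcoef_pow (c z : R) : 0 < c -> 0 < z <= 1 ->
  (forall n, ex_series (fun j => poisson (c * RInt F 0 1) j * convpow (Icoef c) j n)) /\
  is_series (fun n => Gcoef c n * z ^ n)
    (exp (- (c * RInt F 0 1)) * exp (Series (fun k => Icoef c k * z ^ k))).
Proof.
  intros Hc Hz. apply (is_series_compound_pow _ _ z (Series (fun k => Icoef c k * z ^ k)));
    [apply poisson_ge0|intro; apply Icoef_ge0; lra|lra| |apply is_series_poisson_pow].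
  apply Series_correct, ex_series_pow_01; [intro; apply Icoef_ge0; lra| |lra].
  exists (c * RInt F 0 1). apply is_series_Icoef; auto.
Qed.

Lemma Gcoef_ge0 (c : R) (n : nat) : 0 < c -> 0 <= Gcoef c n.
Proof.
  intro Hc. apply Series_ge0; [|apply (is_series_Gcoef_pow c 1); lra].
  intro j. apply Rmult_le_pos; [apply poisson_ge0|apply convpow_ge0; intro; apply Icoef_ge0; lra].
Qed.

Lemma is_series_Gcoef_pow_01 (c z : R) : 0 < c -> 0 < z < 1 ->
  is_series (fun n => Gcoef c n * z ^ n) (G c z).
Proof.
  intros Hc Hz. replace (G c z) with (exp (- (c * RInt F 0 1)) * exp (Series (fun k => Icoef c k * z ^ k))).
  - apply is_series_Gcoef_pow; lra.
  - rewrite (is_series_unique _ _ (is_series_Icoef_pow c z Hz)). unfold G. rewrite <- exp_plus.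
    f_equal. rewrite intF_split by lra. ring.
Qed.

Lemma is_series_Gcoef (c : R) : 0 < c -> is_series (Gcoef c) 1.
Proof.
  intro Hc. destruct (is_series_Gcoef_pow c 1 Hc ltac:(lra)) as [_ H].
  rewrite (Series_ext _ (Icoef c)), (is_series_unique _ _ (is_series_Icoef c Hc)) in H
    by (intro; rewrite pow1; ring).
  rewrite <- exp_plus, Rplus_opp_l, exp_0 in H.
  eapply is_series_ext; [|apply H]. intro n. simpl. rewrite pow1. ring.
Qed.

Lemma Gcoef_distr (c : R) : 0 < c -> is_distr (Gcoef c).
Proof. intro Hc. split; [intro; apply Gcoef_ge0; auto|apply is_series_Gcoef; auto]. Qed.

Lemma pgf_Gcoef (c z : R) : 0 < c -> 0 <= z <= 1 -> pgf (Gcoef c) z = G c z.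
Proof.
  intros Hc Hz. destruct (Rlt_dec 0 z) as [Hz0|Hz0]; [destruct (Rlt_dec z 1) as [Hz1|Hz1]|].
  - apply is_series_unique, is_series_Gcoef_pow_01; lra.
  - replace z with 1 by lra. rewrite G_1. apply pgf_1, Gcoef_distr; auto.
  - replace z with 0 by lra. apply (continuous_from_01_eq (pgf (Gcoef c)) (G c) 0); [lra| | |].
    + apply continuous_from_01_of_continuity_pt, continuity_pt_pgf_nonneg;
        [intro; apply Gcoef_ge0; auto| |rewrite Rabs_R0; lra].
      intros y Hy. eexists. apply is_series_Gcoef_pow_01; auto.
    + apply continuous_from_01_of_continuity_pt, continuity_pt_G. lra.
    + intros y Hy. apply is_series_unique, is_series_Gcoef_pow_01; auto.
Qed.

Lemma G_pow (c : R) (n : nat) (z : R) : (0 < n)%nat -> G (c / INR n) z ^ n = G c z.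
Proof.
  intro Hn. assert (HnR : 0 < INR n) by (apply lt_0_INR; lia).
  unfold G. rewrite exp_pow. f_equal. field. lra.
Qed.

Lemma Gcoef_inf_divisible (c : R) : 0 < c -> inf_divisible (Gcoef c).
Proof.
  intros Hc n Hn. assert (HnR : 0 < INR n) by (apply lt_0_INR; lia).
  assert (Hcn : 0 < c / INR n) by (apply Rdiv_lt_0_compat; auto).
  pose proof (Gcoef_distr _ Hcn) as Hh.
  exists (Gcoef (c / INR n)). split; auto.
  assert (Hpow : forall z, 0 < z < 1 ->
    is_series (fun k => convpow (Gcoef (c / INR n)) n k * z ^ k) (G (c / INR n) z ^ n)).
  { intros z Hz. apply is_series_convpow_pow; [apply distr_ge0; auto|lra|].
    rewrite <- pgf_Gcoef by (auto; lra). apply is_series_pgf; auto. lra. }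
  apply pow_series_coef_unique.
  - apply convpow_ge0, distr_ge0; auto.
  - intro; apply Gcoef_ge0; auto.
  - intros z Hz. eexists. apply Hpow; auto.
  - intros z Hz. eexists. apply is_series_Gcoef_pow_01; auto.
  - intros z Hz. rewrite (is_series_unique _ _ (Hpow z Hz)), (is_series_unique _ _ (is_series_Gcoef_pow_01 c z Hc Hz)).
    apply G_pow. lia.
Qed.

Lemma is_series_Gcoef_derive_pow (c z : R) : 0 < c -> 0 < z < 1 ->
  is_series (fun k => PS_derive (Gcoef c) k * z ^ k) (G c z * (c * F z)).
Proof.
  intros Hc Hz. assert (Hzr : Rabs z < 1) by (rewrite Rabs_pos_eq; lra).
  assert (Hrad : CV_radius_ge1 (Gcoef c)).
  { apply CV_radius_ge1_nonneg; [intro; apply Gcoef_ge0; auto|].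
    intros r Hr. eexists. apply is_series_Gcoef_pow_01; auto. }
  assert (HD : is_derive (G c) z (PSeries (PS_derive (Gcoef c)) z)).
  { apply (is_derive_ext_loc (PSeries (Gcoef c))); [|apply is_derive_PSeries, Hrad; auto].
    apply (locally_Rabs z (Rmin z (1 - z))); [apply Rmin_pos; lra|].
    intros y Hy. pose proof (Rmin_l z (1 - z)). pose proof (Rmin_r z (1 - z)). apply Rabs_def2 in Hy.
    rewrite PSeries_Series. apply pgf_Gcoef; auto; lra. }
  pose proof (is_derive_unique _ _ _ HD) as E.
  rewrite (is_derive_unique _ _ _ (is_derive_G c z ltac:(lra))) in E. rewrite E.
  apply is_pseries_R, PSeries_correct, CV_radius_inside. rewrite CV_radius_derive. apply Hrad; auto.
Qed.

Lemma is_series_Gcoef_derive (c : R) : 0 < c -> is_series (PS_derive (Gcoef c)) (c * F1).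
Proof.
  intro Hc.
  assert (Hnn : forall k, 0 <= PS_derive (Gcoef c) k).
  { intro k. apply Rmult_le_pos; [apply pos_INR|apply Gcoef_ge0; auto]. }
  destruct (ex_series_pow_bounded (PS_derive (Gcoef c)) Hnn (c * F1)) as [He _].
  { intros z Hz. split; [eexists; apply is_series_Gcoef_derive_pow; auto|].
    rewrite (is_series_unique _ _ (is_series_Gcoef_derive_pow c z Hc Hz)).
    destruct (G_bounds c z ltac:(lra) ltac:(lra)). destruct (F_bounds z ltac:(lra)).
    pose proof F1_gt0. replace (c * F1) with (1 * (c * F1)) by ring.
    apply Rmult_le_compat; try lra; [apply Rmult_le_pos|apply Rmult_le_compat_l]; lra. }
  assert (E : Series (fun k => PS_derive (Gcoef c) k * 1 ^ k) = G c 1 * (c * F 1)).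
  { apply (continuous_from_01_eq (fun z => Series (fun k => PS_derive (Gcoef c) k * z ^ k))
                                 (fun z => G c z * (c * F z)) 1); [lra| | |].
    - intros eps Heps.
      destruct (Series_pow_left_lim _ Hnn _ (Series_correct _ He) eps Heps) as [d [Hd H]].
      exists d. split; auto. intros y Hy Hyd.
      rewrite (Series_ext (fun k => PS_derive (Gcoef c) k * 1 ^ k) (PS_derive (Gcoef c)))
        by (intro; rewrite pow1; ring).
      apply H. apply Rabs_def2 in Hyd. lra.
    - apply continuous_from_01_of_continuity_pt, continuity_pt_G_derivative. lra.
    - intros y Hy. apply is_series_unique, is_series_Gcoef_derive_pow; auto. }
  rewrite G_1, F_ge1, Rmult_1_l in E by lra.
  rewrite <- E, (Series_ext _ (PS_derive (Gcoef c))) by (intro; rewrite pow1; ring).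
  apply Series_correct, He.
Qed.

Lemma mean_Gcoef (c : R) : 0 < c ->
  ex_series (fun k => INR k * Gcoef c k) /\ mean (Gcoef c) = c * F1.
Proof.
  intro Hc. pose proof (is_series_Gcoef_derive c Hc) as HD.
  assert (Hex : ex_series (fun k => INR k * Gcoef c k))
    by (apply (proj2 (ex_series_incr_1 _)); exists (c * F1); exact HD).
  split; auto. unfold mean. rewrite Series_incr_1 by auto. simpl INR. rewrite Rmult_0_l, Rplus_0_l.
  apply is_series_unique, HD.
Qed.

Lemma is_series_size_biased_Gcoef (c z : R) : 0 < c -> 0 < z < 1 ->
  is_series (fun k => size_biased (Gcoef c) k * z ^ k) (z * G c z * F z / F1).
Proof.
  intros Hc Hz. pose proof F1_gt0 as HL. unfold size_biased. rewrite (proj2 (mean_Gcoef c Hc)).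
  apply is_series_decr_1.
  pose proof (is_series_scal_r (z / (c * F1)) _ _ (is_series_Gcoef_derive_pow c z Hc Hz)) as H.
  match goal with |- is_series _ ?l => replace l with (G c z * (c * F z) * (z / (c * F1))) end.
  - eapply is_series_ext; [|apply H]. intro k. unfold PS_derive. simpl. field. lra.
  - unfold plus, opp; simpl. field. lra.
Qed.

Section SizeBiased.
Variables (pzeta pgam pxi : nat -> R).
Hypotheses (Hzeta : is_distr pzeta) (Hgam : is_distr pgam) (Hxi : is_distr pxi)
  (Hpzeta : forall z, 0 <= z <= 1 -> pgf pzeta z = Qstar pX pY b1 b2 z)
  (Hpgam : forall z, 0 <= z <= 1 -> pgf pgam z = (1 - mean pX) / (1 - mean pX * z))
  (Hpxi : forall z, 0 <= z <= 1 -> pgf pxi z = Pstar pX z).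

(* [Pstar] is a pgf only if [mean pX <> 0]: otherwise [Pstar pX 1 = 0] by the convention [x / 0 = 0]. *)
Lemma mean_X_gt0 : 0 < mean pX.
Proof.
  pose proof (mean_ge0 pX HX HmX). destruct (Req_dec (mean pX) 0) as [E|E]; [|lra].
  exfalso. specialize (Hpxi 1 ltac:(lra)). rewrite pgf_1 in Hpxi by auto. unfold Pstar in Hpxi.
  rewrite E in Hpxi. unfold Rdiv in Hpxi. rewrite Rinv_0, Rmult_0_r in Hpxi. lra.
Qed.

Lemma compound_gam_xi_ge0 (n : nat) : 0 <= compound pgam pxi n.
Proof.
  apply Series_ge0.
  - intro j. apply Rmult_le_pos; [apply distr_ge0; auto|apply convpow_ge0, distr_ge0; auto].
  - apply (is_series_compound_pow pgam pxi (1 / 2) (pgf pxi (1 / 2)) (pgf pgam (pgf pxi (1 / 2))));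
      [apply distr_ge0; auto|apply distr_ge0; auto|lra|apply is_series_pgf; auto; lra|].
    apply is_series_pgf, pgf_bounds; auto. lra.
Qed.

Lemma is_series_compound_gam_xi (z : R) : 0 < z < 1 ->
  is_series (fun n => compound pgam pxi n * z ^ n) ((1 - mean pX) / (1 - mean pX * Pstar pX z)).
Proof.
  intro Hz. pose proof (pgf_bounds pxi Hxi z ltac:(lra)) as HQ.
  rewrite <- Hpxi, <- Hpgam by lra.
  apply (is_series_compound_pow pgam pxi z (pgf pxi z));
    [apply distr_ge0; auto|apply distr_ge0; auto|lra|apply is_series_pgf; auto; lra|].
  apply is_series_pgf; auto.
Qed.

Lemma is_series_size_biased_rhs (c z : R) : 0 < c -> 0 < z < 1 ->
  is_series (fun n => conv (Gcoef c) (conv (dirac 1) (conv pzeta (compound pgam pxi))) n * z ^ n)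
    (G c z * (z * (Qstar pX pY b1 b2 z * ((1 - mean pX) / (1 - mean pX * Pstar pX z))))).
Proof.
  intros Hc Hz.
  assert (Hg0 : forall k, 0 <= Gcoef c k) by (intro; apply Gcoef_ge0; auto).
  apply is_series_conv_pow; [auto| |lra|apply is_series_Gcoef_pow_01; auto|].
  { apply conv_ge0; [intro; apply dirac_ge0|apply conv_ge0; [apply distr_ge0; auto|apply compound_gam_xi_ge0]]. }
  match goal with |- is_series _ (z * ?Y) => replace (z * Y) with (z ^ 1 * Y) by ring end.
  apply is_series_conv_pow; [intro; apply dirac_ge0| |lra|apply (is_series_dirac_pow 1)|].
  { apply conv_ge0; [apply distr_ge0; auto|apply compound_gam_xi_ge0]. }
  apply is_series_conv_pow; [apply distr_ge0; auto|apply compound_gam_xi_ge0|lra| |].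
  - rewrite <- Hpzeta by lra. apply is_series_pgf; auto. lra.
  - apply is_series_compound_gam_xi; auto.
Qed.

(* Both sides have pgf [z G F / F1] on (0, 1); on the right this uses [F1 = b1 / b2]. *)
Lemma size_biased_Gcoef_identity (m0 : R) : 0 < m0 -> forall n,
  size_biased (Gcoef (m0 * (b2 / b1))) n
  = conv (Gcoef (m0 * (b2 / b1))) (conv (dirac 1) (conv pzeta (compound pgam pxi))) n.
Proof.
  intro Hm0. set (c := m0 * (b2 / b1)).
  assert (Hc : 0 < c) by (unfold c; apply Rmult_lt_0_compat; auto; apply Rdiv_lt_0_compat; auto).
  pose proof mean_X_lt1. pose proof mean_X_gt0. pose proof F1_eq.
  apply pow_series_coef_unique.
  - intro k. unfold size_biased. rewrite (proj2 (mean_Gcoef c Hc)).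
    apply Rle_mult_inv_pos; [apply Rmult_le_pos; [apply pos_INR|apply Gcoef_ge0; auto]|].
    pose proof F1_gt0. nra.
  - apply conv_ge0; [intro; apply Gcoef_ge0; auto|].
    apply conv_ge0; [intro; apply dirac_ge0|apply conv_ge0; [apply distr_ge0; auto|apply compound_gam_xi_ge0]].
  - intros z Hz. eexists. apply is_series_size_biased_Gcoef; auto.
  - intros z Hz. eexists. apply is_series_size_biased_rhs; auto.
  - intros z Hz.
    rewrite (is_series_unique _ _ (is_series_size_biased_Gcoef c z Hc Hz)),
            (is_series_unique _ _ (is_series_size_biased_rhs c z Hc Hz)).
    rewrite F_lt1 by lra. unfold Fquot, Qstar, Pstar.
    pose proof (one_minus_phi_X_gt0 z ltac:(rewrite Rabs_pos_eq; lra)).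
    assert (mean pX - mean pX * phi pX z <> 0) by nra.
    rewrite F1_eq. field. repeat split; lra.
Qed.

End SizeBiased.
End StationaryEquation.

Theorem proposition5p2
  (pX pY : nat -> R) (b1 b2 m0 : R)
  (HX : is_distr pX) (HY : is_distr pY)
  (HX2 : finite_second_moment pX) (HY2 : finite_second_moment pY)
  (Hb1 : 0 < b1) (Hb2 : 0 < b2) (Hm0 : 0 < m0)
  (HYnd : 0 < mean pY)
  (Hcrit : b1 * (mean pX - 1) + b2 * mean pY = 0) :
  (* ghat is a C^1 solution on [0,1] with ghat(1) = 1 ... *)
  (exists dg : R -> R,
      C1_on01 (ghat pX pY b1 b2 m0) dg /\
      solves_stationary pX pY b1 b2 m0 (ghat pX pY b1 b2 m0) dg) /\
  ghat pX pY b1 b2 m0 1 = 1 /\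
  (* ... and it is the unique one *)
  (forall h dh : R -> R,
      C1_on01 h dh -> h 1 = 1 -> solves_stationary pX pY b1 b2 m0 h dh ->
      forall z, 0 <= z <= 1 -> h z = ghat pX pY b1 b2 m0 z) /\
  (* ghat is the pgf of an infinitely divisible distribution g on N *)
  (exists g : nat -> R,
      is_distr g /\
      (forall z, 0 <= z <= 1 -> pgf g z = ghat pX pY b1 b2 m0 z) /\
      inf_divisible g /\
      ex_series (fun k => INR k * g k) /\
      (* size-biased identity V* =d V + 1 + zeta + sum_{k=1}^gamma xi_k,
         with V ~ g, zeta ~ Q*, gamma ~ Geom(m), xi_k ~ P*, all independent *)
      (forall pzeta pgam pxi : nat -> R,
          is_distr pzeta -> is_distr pgam -> is_distr pxi ->
          (forall z, 0 <= z <= 1 -> pgf pzeta z = Qstar pX pY b1 b2 z) ->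
          (forall z, 0 <= z <= 1 ->
             pgf pgam z = (1 - mean pX) / (1 - mean pX * z)) ->
          (forall z, 0 <= z <= 1 -> pgf pxi z = Pstar pX z) ->
          forall n : nat,
            size_biased g n
            = conv g (conv (dirac 1) (conv pzeta (compound pgam pxi))) n)).
Proof.
  pose proof (ex_series_mean_of_second_moment pX HX HX2) as HmX.
  pose proof (ex_series_mean_of_second_moment pY HY HY2) as HmY.
  pose proof (ghat_G pX pY b1 b2 HX HY HmX Hb1 Hb2 HYnd Hcrit m0) as Hghat.
  set (c := m0 * (b2 / b1)) in Hghat.
  assert (Hc : 0 < c) by (unfold c; apply Rmult_lt_0_compat; auto; apply Rdiv_lt_0_compat; auto).
  split; [|split; [|split]].
  - apply ghat_solves; auto.
  - rewrite Hghat by lra. apply G_1.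
  - apply stationary_unique; auto.
  - exists (Gcoef pX pY c). split; [|split; [|split; [|split]]].
    + apply (Gcoef_distr pX pY b1 b2); auto.
    + intros z Hz. rewrite Hghat by auto. apply (pgf_Gcoef pX pY b1 b2); auto.
    + apply (Gcoef_inf_divisible pX pY b1 b2); auto.
    + apply (mean_Gcoef pX pY b1 b2); auto.
    + intros pzeta pgam pxi Hzeta Hgam Hxi Hpzeta Hpgam Hpxi.
      apply size_biased_Gcoef_identity; auto.
Qed.
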